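(* For $i\in\{1,2\}$, let $L_i$ be a planar semimodular lattice with a fixed planar diagram and let $L_i'$ be the full slimming sublattice of $L_i$ obtained from that diagram. Then: (i) $L_1$ is glued sum indecomposable if and only if $L_1'$ is glued sum indecomposable. (ii) If $\varphi\colon L_1\to L_2$ is a lattice isomorphism, then there is an automorphism $\pi$ of $L_1$ such that $\pi(x)=x$ for every reducible element $x\in L_1$, and the restriction of $\varphi\circ\pi$ to $L_1'$ is a $\nu$-preserving isomorphism from $L_1'$ onto $L_2'$, i.e., $\nu_{L_1,L_1'}=\nu_{L_2,L_2'}\circ(\varphi\circ\pi)|_{L_1'}$. (iii) Any two full slimming sublattices of a planar semimodular lattice (obtained from possibly different planar diagrams) are isomorphic.
   Context: All lattices are finite. A lattice is glued sum indecomposable if it is not a chain and every $x\in L\setminus\{0,1\}$ is incomparable with some element. An element is reducible if it is join-reducible or meet-reducible, i.e., not doubly irreducible. Given a planar diagram of a planar semimodular lattice $L$, an eye is a doubly irreducible element lying in the interior of an interval of length $2$ (strictly inside the region bounded by the leftmost and rightmost maximal chains of that interval). A full slimming sublattice $L'$ of $L$ is obtained by omitting eyes (with their edges) one by one as long as possible; $L'$ is a slim semimodular sublattice containing all reducible elements of $L$, and in it every element has at most two covers, so each $4$-cell (covering square of the diagram) of $L'$ is determined by its bottom. The numerical companion map $\nu_{L,L'}\colon L'\to\{0,1,2,\dots\}$ sends $x$ to $n$ if $x$ is the bottom of a $4$-cell of $L'$ into whose interior $n$ eyes of $L$ were placed, and to $0$ otherwise. An isomorphism $\varphi\colon L_1'\to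 L_2'$ is $\nu$-preserving if $\nu_{L_1,L_1'}=\nu_{L_2,L_2'}\circ\varphi$. *)

From HB Require Import structures.
From mathcomp Require Import all_boot all_order.
Set Implicit Arguments. Unset Strict Implicit. Unset Printing Implicit Defensive.
Import Order.TTheory.
Local Open Scope order_scope.

Section PlanarSemimodular.
Variables (d : Order.disp_t) (L : finTBLatticeType d).
Implicit Types (S : {set L}) (x y z e : L).

Definition covS S x y : bool :=
  [&& x \in S, y \in S, x < y & [forall z, ~~ [&& z \in S, x < z & z < y]]].

Definition covL x y : bool := covS [set: L] x y.

Definition semimodular : Prop :=
  forall x y z, covL x y -> (x `|` z == y `|` z) || covL (x `|` z) (y `|` z).

Definition linear_order (r : rel L) : Prop :=
  [/\ reflexive r, antisymmetric r, transitive r & total r].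

(* A planar diagram of L, up to similarity, is encoded by a 2-realizer
   (l1, l2): two linear orders whose intersection is the order of L.
   For incomparable x, y: "x is to the left of y" iff l1 x y (iff l2 y x).
   L is planar iff such a realizer exists (Kelly--Rival, Baker--Fishburn--Roberts). *)
Definition planar_diagram (l1 l2 : rel L) : Prop :=
  [/\ linear_order l1, linear_order l2 & forall x y, (x <= y) = l1 x y && l2 x y].

Definition leftof (l1 : rel L) x y : bool := (x != y) && l1 x y.

Definition interval_len2 S (a b : L) : bool :=
  [&& a \in S, b \in S, a < b,
      [exists z, [&& z \in S, a < z & z < b]] &
      [forall z, [&& z \in S, a < z & z < b] ==> covS S a z && covS S z b]].

Definition dbl_irr S x : bool :=
  (#|[set y | covS S y x]| <= 1)%N && (#|[set y | covS S x y]| <= 1)%N.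

Definition reducible x : bool := ~~ dbl_irr [set: L] x.

(* e is an eye of (the diagram l1 restricted to) S: doubly irreducible and
   strictly inside the region bounded by the leftmost and rightmost maximal
   chains of an interval [a,b] of length 2, i.e. e is a middle element of
   [a,b] and neither the leftmost nor the rightmost one. *)
Definition eye (l1 : rel L) S e : bool :=
  [&& e \in S, dbl_irr S e &
   [exists a, exists b, exists c1, exists c2,
     [&& interval_len2 S a b, a < e, e < b,
         c1 \in S, a < c1, c1 < b, c2 \in S, a < c2, c2 < b,
         leftof l1 c1 e & leftof l1 e c2]]].

Inductive slimming_reach (l1 : rel L) : {set L} -> Prop :=
| sr_full : slimming_reach l1 [set: L]
| sr_step S e : slimming_reach l1 S -> eye l1 S e -> slimming_reach l1 (S :\ e).

Definition full_slimming (l1 : rel L) S : Prop :=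
  slimming_reach l1 S /\ forall e, ~~ eye l1 S e.

Definition cell4 (l1 : rel L) S x c1 c2 t : bool :=
  [&& leftof l1 c1 c2, covS S x c1, covS S x c2, covS S c1 t & covS S c2 t].

(* numerical companion map nu_{L,S}: number of (omitted) eyes of L placed
   into the interior of the 4-cell of S with bottom x (0 if no such cell) *)
Definition nu (l1 : rel L) S x : nat :=
  #|[set e | (e \notin S) &&
       [exists c1, exists c2, exists t,
         [&& cell4 l1 S x c1 c2 t, x < e, e < t, leftof l1 c1 e & leftof l1 e c2]]]|.

Definition chainS S : bool := [forall x, forall y, (x \in S) && (y \in S) ==> (x >=< y)].

Definition gs_indecomposable S : Prop :=
  ~~ chainS S /\
  forall x, x \in S -> x != \bot -> x != \top -> exists2 y, y \in S & ~~ (x >=< y).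

End PlanarSemimodular.

Definition lattice_iso d1 d2 (L1 : finTBLatticeType d1) (L2 : finTBLatticeType d2)
  (f : L1 -> L2) : Prop :=
  [/\ bijective f, {morph f : x y / x `|` y} & {morph f : x y / x `&` y}].

From HB Require Import structures.
From mathcomp Require Import all_boot all_order fingroup perm.
Set Implicit Arguments. Unset Strict Implicit. Unset Printing Implicit Defensive.
Import Order.TTheory.
Local Open Scope order_scope.

(* An element x of L is interior for a diagram if it is a middle element a -< x -< b of a covering
   interval [a, b] with another middle of that interval on each side of it.  Reading the diagram
   as a realizer shows that an interior element has a as its only lower cover and b as its only
   upper cover; it is doubly irreducible and relates to every other element exactly as a or b does.
   Every eye removed during slimming is interior, and an interior element that survived would
   still be an eye (semimodularity makes all middles of its interval covers), so every full
   slimming sublattice is the set of non-interior elements.  This gives (i) and identifies nu(x)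
   with the number of interior upper covers of x.  The interior middles of a covering interval are
   all its middles except the leftmost and the rightmost one, so their number does not depend on
   the diagram.  Hence, given two diagrams, some permutation of L sends the interior elements of
   the first onto those of the second while preserving lower and upper covers; it is an order
   automorphism fixing all reducible elements.  Pulling the diagram of L2 back along phi gives
   (ii), and (iii) is the case of a single lattice. *)

Section FiberPerm.
Variables (T : finType) (K : eqType) (key : T -> K).

Let fiber (A : {set T}) k := [set x in A | key x == k].

Lemma subset_fibers_eq (A B : {set T}) :
  A \subset B -> (forall k, #|fiber A k| = #|fiber B k|) -> A = B.
Proof.
move=> subAB eqAB; apply/eqP; rewrite eqEsubset subAB; apply/subsetP => y yB.
have /eqP/setP/(_ y) : fiber A (key y) == fiber B (key y).
  rewrite eqEcard eqAB leqnn andbT; apply/subsetP => z.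
  by rewrite !inE => /andP[/(subsetP subAB) ->].
by rewrite !inE yB eqxx !andbT => ->.
Qed.

Lemma fiber_exchange (A B : {set T}) x : #|fiber A (key x)| = #|fiber B (key x)| ->
  x \in A :\: B -> exists2 y, y \in B :\: A & key y = key x.
Proof.
move=> eqAB; rewrite inE => /andP[xB xA].
have /subsetPn[y] : ~~ (fiber B (key x) \subset fiber A (key x)).
  apply: contraNN xB => subBA; have /eqP/setP/(_ x) : fiber B (key x) == fiber A (key x).
    by rewrite eqEcard subBA eqAB leqnn.
  by rewrite !inE xA eqxx /= andbT => ->.
by rewrite !inE => /andP[yB /eqP ky]; rewrite ky eqxx andbT => yA; exists y; rewrite ?inE ?yA.
Qed.

Lemma perm_fibers (A B : {set T}) : (forall k, #|fiber A k| = #|fiber B k|) ->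
  exists p : {perm T}, [/\ p @: A = B, forall z, key (p z) = key z &
                            forall z, z \notin A :|: B -> p z = z].
Proof.
have [n] := ubnP #|A :\: B|; elim: n => // n IHn in A *; rewrite ltnS => leAB eqAB.
have [AB0|[x xAB]] := set_0Vmem (A :\: B).
  rewrite -(subset_fibers_eq _ eqAB) -?setD_eq0 ?AB0 //.
  exists 1%g; split=> [|z|z]; rewrite ?perm1 //.
  by apply/setP => z; rewrite -{1}(perm1 z) mem_imset //; apply: perm_inj.
have [y yBA ky] := fiber_exchange (eqAB _) xAB.
move: xAB yBA; rewrite !inE => /andP[xB xA] /andP[yA yB].
pose t := tperm x y.
have mem_t C z : (z \in t @: C) = (t z \in C).
  by apply/imsetP/idP => [[w wC ->]|tzC]; [rewrite tpermK | exists (t z); rewrite ?tpermK].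
have key_t z : key (t z) = key z by rewrite /t; case: tpermP => [->|->|//]; rewrite ky.
have [|k|p [pA key_p fix_p]] := IHn (t @: A).
- apply: leq_trans leAB; rewrite (cardsD1 x (A :\: B)) !inE xA xB add1n ltnS.
  apply/subset_leq_card/subsetP => z; rewrite !inE mem_t => /andP[zB].
  rewrite /t; case: tpermP => [_|zy|/eqP zx _ ->]; first by rewrite (negbTE yA).
    by rewrite zy yB in zB.
  by rewrite zx zB.
- suff -> : fiber (t @: A) k = t @: fiber A k by rewrite card_imset ?eqAB //; apply: perm_inj.
  by apply/setP => z; rewrite mem_t !inE mem_t key_t.
exists (t * p)%g; split=> [|z|z].
- by rewrite -pA -imset_comp; apply: eq_imset => z; rewrite permM.
- by rewrite permM key_p key_t.
rewrite !inE negb_or => /andP[zA zB].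
have tz : t z = z.
  by apply: tpermD; [apply: contraNneq zA => <- | apply: contraNneq zB => <-].
by rewrite permM tz fix_p // !inE mem_t tz negb_or zA zB.
Qed.

End FiberPerm.

Lemma imset_set_bij (T1 T2 : finType) (f : T1 -> T2) (P1 : pred T1) (P2 : pred T2) :
  bijective f -> (forall x, P2 (f x) = P1 x) -> f @: [set x | P1 x] = [set y | P2 y].
Proof.
case=> g fK gK P12; apply/setP => y; rewrite -[y]gK mem_imset ?inE ?P12 //.
exact: can_inj fK.
Qed.

Lemma card_set_bij (T1 T2 : finType) (f : T1 -> T2) (P1 : pred T1) (P2 : pred T2) :
  bijective f -> (forall x, P2 (f x) = P1 x) -> #|[set x | P1 x]| = #|[set y | P2 y]|.
Proof.
move=> fbij P12; rewrite -(imset_set_bij fbij P12) card_imset //; exact: bij_inj.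
Qed.

Section Covers.
Variables (d : Order.disp_t) (L : finTBLatticeType d).
Implicit Types (S : {set L}) (x y z a b u v : L).

Lemma covLP x y : reflect (x < y /\ forall z, x < z -> z < y -> False) (covL x y).
Proof.
rewrite /covL /covS !in_setT /=; apply: (iffP andP) => [[xy /forallP nomid]|[xy nomid]].
  by split=> // z xz zy; move: (nomid z); rewrite in_setT xz zy.
by split=> //; apply/forallP => z; rewrite in_setT; apply/and3P => -[_]; apply: nomid.
Qed.

Lemma covL_lt x y : covL x y -> x < y. Proof. by case/covLP. Qed.

Lemma covL_le x y : covL x y -> x <= y. Proof. by move/covL_lt/ltW. Qed.

Lemma covL_nomid x y z : covL x y -> x < z -> z < y -> False.
Proof. by case/covLP=> _; apply. Qed.

Lemma covS_lt S x y : covS S x y -> x < y. Proof. by case/and4P. Qed.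

Lemma covS_nomid S x y z : covS S x y -> z \in S -> x < z -> z < y -> False.
Proof. by move=> /and4P[_ _ _ /forallP/(_ z)/negP nz] zS xz zy; apply: nz; rewrite zS xz zy. Qed.

Lemma covL_covS S x y : x \in S -> y \in S -> covL x y -> covS S x y.
Proof.
move=> xS yS /covLP[xy nomid]; rewrite /covS xS yS xy; apply/forallP => z.
by apply/and3P => -[_]; apply: nomid.
Qed.

Lemma covS_covL S x y :
  (forall z, z \notin S -> x < z -> z < y -> False) -> covS S x y -> covL x y.
Proof.
move=> outS xy; apply/covLP; split=> [|z xz zy]; first exact: covS_lt xy.
by case: (boolP (z \in S)) => [zS|/outS]; [apply: covS_nomid xy zS xz zy | apply].
Qed.

Lemma covL_above x y : x < y -> exists2 c, covL x c & c <= y.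
Proof.
move=> xy; pose P c := (x < c) && (c <= y).
have Py : P y by rewrite /P xy lexx.
have [c /andP[xc cy] cmin] := arg_minnP (fun c => #|[set w | w < c]|) Py.
exists c => //; apply/covLP; split=> // z xz zc.
have := cmin z; rewrite /P xz (le_trans (ltW zc) cy) => /(_ isT); apply/negP; rewrite -ltnNge.
apply: proper_card; apply/properP; split; last by exists z; rewrite !inE ?zc ?ltxx.
by apply/subsetP => w; rewrite !inE => /lt_trans; apply.
Qed.

Lemma covL_below x y : x < y -> exists2 c, covL c y & x <= c.
Proof.
move=> xy; pose P c := (x <= c) && (c < y).
have Px : P x by rewrite /P xy lexx.
have [c /andP[xc cy] cmax] := arg_minnP (fun c => #|[set w | c < w]|) Px.
exists c => //; apply/covLP; split=> // z cz zy.
have := cmax z; rewrite /P zy (le_trans xc (ltW cz)) => /(_ isT); apply/negP; rewrite -ltnNge.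
apply: proper_card; apply/properP; split; last by exists z; rewrite !inE ?cz ?ltxx.
by apply/subsetP => w; rewrite !inE; apply: lt_trans.
Qed.

Lemma covL_eq_above a u v : covL a u -> covL a v -> u <= v -> u = v.
Proof.
move=> au av; rewrite le_eqVlt => /predU1P[//|uv].
by case: (covL_nomid av (covL_lt au) uv).
Qed.

Lemma covL_eq_below b u v : covL u b -> covL v b -> u <= v -> u = v.
Proof.
move=> ub vb; rewrite le_eqVlt => /predU1P[//|uv].
by case: (covL_nomid ub uv (covL_lt vb)).
Qed.

Lemma covL_uncomparable a u v : covL a u -> covL a v -> u != v -> ~~ (u >=< v).
Proof.
move=> au av /eqP uv; apply/orP => -[/(covL_eq_above au av)|/(covL_eq_above av au)] //.
by move/esym.
Qed.

Lemma covL_meet a u v : covL a u -> covL a v -> u != v -> u `&` v = a.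
Proof.
move=> au av uv; have : a <= u `&` v by rewrite lexI (covL_le au) (covL_le av).
rewrite le_eqVlt => /predU1P[//|auv].
have := leIl u v; rewrite le_eqVlt => /predU1P[uvu|lt_uv_u].
  by move: uv; rewrite (covL_eq_above au av) ?eqxx // -uvu leIr.
by case: (covL_nomid au auv lt_uv_u).
Qed.

Lemma covL_join b u v : covL u b -> covL v b -> u != v -> u `|` v = b.
Proof.
move=> ub vb uv; have : u `|` v <= b by rewrite leUx (covL_le ub) (covL_le vb).
rewrite le_eqVlt => /predU1P[//|uvb].
have := leUl u v; rewrite le_eqVlt => /predU1P[uuv|lt_u_uv].
  by move: uv; rewrite (covL_eq_below vb ub) ?eqxx // uuv leUr.
by case: (covL_nomid ub lt_u_uv uvb).
Qed.

End Covers.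

Section Interior.
Variables (d : Order.disp_t) (L : finTBLatticeType d).
Implicit Types (x y z a b t u v : L).

Definition mid a b x : bool := covL a x && covL x b.

Definition cover_sets x := ([set y | covL y x], [set y | covL x y]).

(* x is an eye of L itself in the diagram l1. *)
Definition interior (l1 : rel L) x : bool :=
  [exists a, exists b, exists c1, exists c2,
    [&& mid a b x, mid a b c1, mid a b c2, leftof l1 c1 x & leftof l1 x c2]].

Lemma interiorI (l1 : rel L) a b c1 c2 x : mid a b x -> mid a b c1 -> mid a b c2 ->
  leftof l1 c1 x -> leftof l1 x c2 -> interior l1 x.
Proof.
move=> mx mc1 mc2 c1x xc2; apply/existsP; exists a; apply/existsP; exists b.
by apply/existsP; exists c1; apply/existsP; exists c2; rewrite mx mc1 mc2 c1x xc2.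
Qed.

Lemma cover_sets1P x a b : cover_sets x = ([set a], [set b]) <->
  [/\ mid a b x, (forall y, covL y x -> y = a) & (forall y, covL x y -> y = b)].
Proof.
split=> [[/setP Ea /setP Eb]|[/andP[ax xb] Ua Ub]].
  have Ea' y : covL y x = (y == a) by have := Ea y; rewrite !inE.
  have Eb' y : covL x y = (y == b) by have := Eb y; rewrite !inE.
  by split=> [|y|y]; rewrite /mid ?Ea' ?Eb' ?eqxx // => /eqP.
congr pair; apply/setP => y; rewrite !inE; apply/idP/eqP => [|->] //.
  exact: Ua.
exact: Ub.
Qed.

Lemma cover_sets1_le_above x a b y : cover_sets x = ([set a], [set b]) ->
  y != x -> (x <= y) = (b <= y).
Proof.
case/cover_sets1P=> /andP[_ xb] _ Ub yx; apply/idP/idP => [xy|]; last exact: le_trans (covL_le xb).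
have [c xc cy] : exists2 c, covL x c & c <= y by apply: covL_above; rewrite lt_def yx.
by rewrite -(Ub _ xc).
Qed.

Lemma cover_sets1_le_below x a b y : cover_sets x = ([set a], [set b]) ->
  y != x -> (y <= x) = (y <= a).
Proof.
case/cover_sets1P=> /andP[ax _] Ua _ yx; apply/idP/idP => [yx'|ya].
  have [c cx yc] : exists2 c, covL c x & y <= c by apply: covL_below; rewrite lt_def eq_sym yx.
  by rewrite -(Ua _ cx).
exact: le_trans ya (covL_le ax).
Qed.


Lemma mid_uncomparable_above a b x u y : mid a b x -> mid a b u -> u != x ->
  covL x y -> y != b -> ~~ (u >=< y).
Proof.
move=> /andP[ax xb] /andP[au ub] ux xy yb; apply/orP => -[uy|yu].
  have : b <= y by rewrite -(covL_join ub xb ux) leUx uy covL_le.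
  rewrite le_eqVlt => /predU1P[by'|lt_by]; first by rewrite by' eqxx in yb.
  exact: covL_nomid xy (covL_lt xb) lt_by.
by move/eqP: ux; apply; apply/esym/(covL_eq_above ax au)/(le_trans (covL_le xy)).
Qed.

Lemma mid_uncomparable_below a b x u y : mid a b x -> mid a b u -> u != x ->
  covL y x -> y != a -> ~~ (u >=< y).
Proof.
move=> /andP[ax xb] /andP[au ub] ux yx ya; apply/orP => -[uy|yu].
  by move/eqP: ux; apply; apply/(covL_eq_below ub xb)/(le_trans uy)/covL_le.
have : y <= a by rewrite -(covL_meet au ax ux) lexI yu covL_le.
rewrite le_eqVlt => /predU1P[ya'|lt_ya]; first by rewrite ya' eqxx in ya.
exact: covL_nomid yx lt_ya (covL_lt ax).
Qed.

Lemma comparable_two_mids a b u v x : mid a b u -> mid a b v -> u != v ->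
  x >=< u -> x >=< v -> (x <= a) || (b <= x).
Proof.
move=> /andP[au ub] /andP[av vb] uv.
have -> : forall w, (x >=< w) = (x <= w) || (w <= x) by [].
case/orP=> [xu|ux] /orP[xv|vx].
- by rewrite -(covL_meet au av uv) lexI xu xv.
- by move: uv; rewrite (covL_eq_above av au (le_trans vx xu)) eqxx.
- by move: uv; rewrite (covL_eq_above au av (le_trans ux xv)) eqxx.
- by rewrite -(covL_join ub vb uv) leUx ux vx orbT.
Qed.

Section Realizer.
Variables (l1 l2 : rel L).
Hypothesis diagram : planar_diagram l1 l2.

Let l1_trans : transitive l1. Proof. by case: diagram => -[]. Qed.
Let l2_trans : transitive l2. Proof. by case: diagram => _ []. Qed.

Lemma le_realizer x y : (x <= y) = l1 x y && l2 x y.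
Proof. by case: diagram. Qed.

Lemma l1_uncomparable u v : ~~ (u >=< v) -> l1 u v = l2 v u.
Proof.
case: diagram => -[_ _ _ tot1] [_ _ _ tot2] _.
have -> : (u >=< v) = (u <= v) || (v <= u) by [].
rewrite !le_realizer => nc; apply/idP/idP => luv.
  by case/orP: (tot2 v u) => // l2uv; move: nc; rewrite luv l2uv.
by case/orP: (tot1 u v) => // l1vu; move: nc; rewrite luv l1vu orbT.
Qed.

Lemma between_le_upper c1 c2 y t : l1 c1 y -> l1 y c2 ->
  ~~ (c1 >=< y) -> ~~ (y >=< c2) -> c1 <= t -> c2 <= t -> y <= t.
Proof.
move=> l1c1y l1yc2 nc1 nc2; rewrite !le_realizer => /andP[_ l2c1t] /andP[l1c2t _].
by rewrite (l1_trans l1yc2 l1c2t) (l2_trans _ l2c1t) // -(l1_uncomparable nc1).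
Qed.

Lemma between_le_lower c1 c2 y t : l1 c1 y -> l1 y c2 ->
  ~~ (c1 >=< y) -> ~~ (y >=< c2) -> t <= c1 -> t <= c2 -> t <= y.
Proof.
move=> l1c1y l1yc2 nc1 nc2; rewrite !le_realizer => /andP[l1tc1 _] /andP[_ l2tc2].
by rewrite (l1_trans l1tc1 l1c1y) (l2_trans l2tc2) // -(l1_uncomparable nc2).
Qed.

Section Witness.
Variables (a b x c1 c2 : L).
Hypotheses (mx : mid a b x) (mc1 : mid a b c1) (mc2 : mid a b c2).
Hypotheses (c1x : leftof l1 c1 x) (xc2 : leftof l1 x c2).

Let c1_neq_x : c1 != x. Proof. by case/andP: c1x. Qed.
Let c2_neq_x : c2 != x. Proof. by rewrite eq_sym; case/andP: xc2. Qed.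

Let nc1x : ~~ (c1 >=< x).
Proof. exact: covL_uncomparable (andP mc1).1 (andP mx).1 c1_neq_x. Qed.

Let nxc2 : ~~ (x >=< c2).
Proof. by rewrite comparable_sym (covL_uncomparable (andP mc2).1 (andP mx).1 c2_neq_x). Qed.

(* Another cover y of x would be incomparable to c1 and c2 but enclosed between them in the
   diagram, hence between a and b. *)
Lemma witness_upper_cover y : covL x y -> y = b.
Proof.
move=> xy; apply/eqP/negP => /negP yb.
have nc1y := mid_uncomparable_above mx mc1 c1_neq_x xy yb.
have nyc2 : ~~ (y >=< c2).
  by rewrite comparable_sym (mid_uncomparable_above mx mc2 c2_neq_x xy yb).
have /andP[l1xy l2xy] : l1 x y && l2 x y by rewrite -le_realizer covL_le.
have l1c1y : l1 c1 y by apply: l1_trans l1xy; case/andP: c1x.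
have l1yc2 : l1 y c2.
  by rewrite (l1_uncomparable nyc2) (l2_trans _ l2xy) // -(l1_uncomparable nxc2); case/andP: xc2.
have : y <= b.
  apply: between_le_upper l1c1y l1yc2 nc1y nyc2 _ _; apply: covL_le.
    by case/andP: mc1.
  by case/andP: mc2.
rewrite le_eqVlt => /predU1P[/eqP|lt_yb]; first by rewrite (negbTE yb).
by case/andP: mx => _ xb; apply: covL_nomid xb (covL_lt xy) lt_yb.
Qed.

Lemma witness_lower_cover y : covL y x -> y = a.
Proof.
move=> yx; apply/eqP/negP => /negP ya.
have nc1y := mid_uncomparable_below mx mc1 c1_neq_x yx ya.
have nyc2 : ~~ (y >=< c2).
  by rewrite comparable_sym (mid_uncomparable_below mx mc2 c2_neq_x yx ya).
have /andP[l1yx l2yx] : l1 y x && l2 y x by rewrite -le_realizer covL_le.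
have l1yc2 : l1 y c2 by apply: l1_trans l1yx _; case/andP: xc2.
have l1c1y : l1 c1 y.
  by rewrite (l1_uncomparable nc1y) (l2_trans l2yx) // -(l1_uncomparable nc1x); case/andP: c1x.
have : a <= y.
  apply: between_le_lower l1c1y l1yc2 nc1y nyc2 _ _; apply: covL_le.
    by case/andP: mc1.
  by case/andP: mc2.
rewrite le_eqVlt => /predU1P[/eqP|lt_ay]; first by rewrite eq_sym (negbTE ya).
by case/andP: mx => ax _; apply: covL_nomid ax lt_ay (covL_lt yx).
Qed.

End Witness.

Lemma interiorP x : interior l1 x -> exists a b, cover_sets x = ([set a], [set b]).
Proof.
case/existsP=> a /existsP[b /existsP[c1 /existsP[c2 /and5P[mx mc1 mc2 c1x xc2]]]].
exists a, b; apply/cover_sets1P; split=> // y.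
  exact: witness_lower_cover mx mc1 mc2 c1x xc2 y.
exact: witness_upper_cover mx mc1 mc2 c1x xc2 y.
Qed.

Lemma interior_witness a b x : interior l1 x -> mid a b x ->
  exists c1 c2, [/\ mid a b c1, mid a b c2, leftof l1 c1 x & leftof l1 x c2].
Proof.
move=> Ix /andP[ax xb].
case/existsP: Ix => a' /existsP[b' /existsP[c1 /existsP[c2 /and5P[mx mc1 mc2 c1x xc2]]]].
have ea := witness_lower_cover mx mc1 mc2 c1x xc2 ax.
have eb := witness_upper_cover mx mc1 mc2 c1x xc2 xb.
by subst a' b'; exists c1, c2.
Qed.

Lemma extremal_mids a b x : mid a b x -> exists lm rm,
  [/\ mid a b lm, mid a b rm, forall z, mid a b z -> l1 lm z & forall z, mid a b z -> l1 z rm].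
Proof.
case: diagram => -[refl1 _ _ tot1] _ _ mx.
have [lm mlm lmin] := extremumP id refl1 l1_trans tot1 mx.
have [rm mrm rmax] := extremumP (ord := fun u v => l1 v u) id refl1
  (fun _ _ _ h1 h2 => l1_trans h2 h1) (fun u v => tot1 v u) mx.
by exists lm, rm.
Qed.

Section Extremal.
Variables (a b lm rm : L).
Hypotheses (mlm : mid a b lm) (mrm : mid a b rm).
Hypotheses (lmin : forall z, mid a b z -> l1 lm z) (rmax : forall z, mid a b z -> l1 z rm).

Lemma interior_mid z : mid a b z -> interior l1 z = (z != lm) && (z != rm).
Proof.
case: diagram => -[_ anti1 _ _] _ _ mz; apply/idP/andP => [Iz|[zlm zrm]].
  have [c1 [c2 [mc1 mc2 /andP[c1z l1c1z] /andP[zc2 l1zc2]]]] := interior_witness Iz mz.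
  split; apply/eqP => zE.
    by move: c1z; rewrite (@anti1 c1 z) ?eqxx // l1c1z zE lmin.
  by move: zc2; rewrite (@anti1 z c2) ?eqxx // l1zc2 zE rmax.
apply: (interiorI mz mlm mrm); rewrite /leftof.
  by rewrite eq_sym zlm lmin.
by rewrite zrm rmax.
Qed.

Lemma extremal_noninterior : ~~ interior l1 lm /\ ~~ interior l1 rm.
Proof. by rewrite !interior_mid // !eqxx andbF. Qed.

Lemma interior_between z : mid a b z -> interior l1 z ->
  [/\ leftof l1 lm z, leftof l1 z rm & lm != rm].
Proof.
case: diagram => -[_ anti1 _ _] _ _ mz; rewrite interior_mid // => /andP[zlm zrm].
rewrite /leftof eq_sym zlm zrm lmin ?rmax //; split=> //.
by apply: contraNneq zlm => elr; apply/eqP/anti1; rewrite lmin // elr rmax.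
Qed.

End Extremal.

Lemma card_interior_mids a b :
  #|[set z | interior l1 z && mid a b z]| = (#|[set z | mid a b z]| - 2)%N.
Proof.
set M := [set z | mid a b z].
have [M0|[x]] := set_0Vmem M.
  rewrite M0 cards0; apply/eqP; rewrite cards_eq0; apply/eqP/setP => z.
  by move/setP: M0 => /(_ z); rewrite !inE => ->; rewrite andbF.
rewrite inE => mx; have [lm [rm [mlm mrm lmin rmax]]] := extremal_mids mx.
have -> : [set z | interior l1 z && mid a b z] = M :\ lm :\ rm.
  apply/setP => z; rewrite !inE; case mz: (mid a b z); rewrite ?andbF ?andbT //.
  by rewrite (interior_mid mlm mrm lmin rmax mz) andbC.
have [elr|lmrm] := eqVneq lm rm.
  case: diagram => -[_ anti1 _ _] _ _.
  have -> : M = [set lm].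
    apply/setP => z; rewrite !inE; apply/idP/eqP => [mz|->//].
    by apply: anti1; rewrite lmin // andbT elr rmax.
  by rewrite -elr setDv set0D cards0 cards1.
rewrite (cardsD1 lm M) (cardsD1 rm (M :\ lm)) !inE eq_sym lmrm mlm mrm.
by rewrite !add1n !subSS subn0.
Qed.

Lemma covS_noninterior (S : {set L}) u v :
  (forall z, z \notin S -> interior l1 z) -> covS S u v -> covL u v.
Proof.
move=> outS uv; suff nomid z : z \notin S -> u < z -> z < v -> False.
  exact: covS_covL nomid uv.
move=> /outS Iz uz zv; have [a [b kz]] := interiorP Iz; have /cover_sets1P[mz _ _] := kz.
have [lm [rm [mlm mrm lmin rmax]]] := extremal_mids mz.
have [nlm _] := extremal_noninterior mlm mrm lmin rmax.
have lmS : lm \in S by apply: contraR nlm => /outS.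
have ua : u <= a by rewrite -(cover_sets1_le_below kz) ?ltW ?lt_eqF.
have bv : b <= v by rewrite -(cover_sets1_le_above kz) ?ltW ?gt_eqF.
case/andP: mlm => alm lmb.
exact: covS_nomid uv lmS (le_lt_trans ua (covL_lt alm)) (lt_le_trans (covL_lt lmb) bv).
Qed.

Lemma dbl_irr_interior (S : {set L}) x :
  (forall z, z \notin S -> interior l1 z) -> interior l1 x -> dbl_irr S x.
Proof.
move=> outS /interiorP[a [b /cover_sets1P[_ Ua Ub]]].
rewrite /dbl_irr; apply/andP; split; [rewrite -(cards1 a) | rewrite -(cards1 b)];
  apply: subset_leq_card; apply/subsetP => y; rewrite !inE => /(covS_noninterior outS);
  [move/Ua | move/Ub] => -> //.
Qed.

Lemma reducible_noninterior x : reducible x -> ~~ interior l1 x.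
Proof.
by apply: contraNN => Ix; apply: dbl_irr_interior Ix => z; rewrite in_setT.
Qed.

Lemma interior_cover_sets1 a b x : interior l1 x -> mid a b x -> cover_sets x = ([set a], [set b]).
Proof.
move=> Ix /andP[ax xb]; have [a' [b' kx]] := interiorP Ix; have /cover_sets1P[_ Ua Ub] := kx.
by rewrite kx -(Ua _ ax) -(Ub _ xb).
Qed.

Lemma interior_bounds_reducible a b x : interior l1 x -> mid a b x -> reducible a && reducible b.
Proof.
move=> Ix mx; have [c1 [_ [/andP[ac1 c1b] _ /andP[c1x _] _]]] := interior_witness Ix mx.
have /andP[ax xb] := mx.
rewrite /reducible /dbl_irr !negb_and -!ltnNge.
apply/andP; split; apply/orP; [right | left];
  (apply: (@leq_trans #|[set x; c1]|); first by rewrite cards2 eq_sym c1x);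
  by apply/subset_leq_card/subsetP => y; rewrite !inE => /orP[] /eqP ->.
Qed.

Lemma interior_pinned x : interior l1 x ->
  exists a b, cover_sets x = ([set a], [set b]) /\ reducible a && reducible b.
Proof.
move=> Ix; have [a [b kx]] := interiorP Ix; have /cover_sets1P[mx _ _] := kx.
by exists a, b; rewrite (interior_bounds_reducible Ix mx).
Qed.

Lemma card_interior_cover_sets1 a b :
  #|[set x | interior l1 x & cover_sets x == ([set a], [set b])]| = (#|[set z | mid a b z]| - 2)%N.
Proof.
rewrite -card_interior_mids; apply: eq_card => x; rewrite !inE.
case Ix: (interior l1 x) => //=; apply/eqP/idP => [/cover_sets1P[]//|].
exact: interior_cover_sets1.
Qed.

Lemma interior_noninterior_mids y : interior l1 y -> exists a b lm rm,
  [/\ mid a b y, mid a b lm, mid a b rm, ~~ interior l1 lm /\ ~~ interior l1 rm & lm != rm].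
Proof.
move=> Iy; have [a [b /cover_sets1P[my _ _]]] := interiorP Iy.
have [lm [rm [mlm mrm lmin rmax]]] := extremal_mids my.
have [_ _ lmrm] := interior_between mlm mrm lmin rmax my Iy.
by exists a, b, lm, rm; split=> //; exact: (extremal_noninterior mlm mrm lmin rmax).
Qed.

Lemma gs_indecomposable_noninterior :
  gs_indecomposable [set: L] <-> gs_indecomposable [set x | ~~ interior l1 x].
Proof.
set S := [set x | ~~ interior l1 x].
have inS y : ~~ interior l1 y -> y \in S by rewrite inE.
split=> -[nchain uncomp]; split.
- case: (pickP (interior l1)) => [z Iz|noI]; last first.
    by move: nchain; congr (~~ chainS _); apply/setP => y; rewrite !inE noI.
  have [a [b [lm [rm [_ /andP[alm _] /andP[arm _] [nlm nrm] lmrm]]]]] :=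
    interior_noninterior_mids Iz.
  apply/negP => /forallP/(_ lm)/forallP/(_ rm); rewrite !inS //=; apply/negP.
  exact: covL_uncomparable alm arm lmrm.
- move=> x xS x0 x1; have [y _ nxy] := uncomp x (in_setT x) x0 x1.
  have [Iy|nIy] := boolP (interior l1 y); last by exists y; rewrite ?inS.
  have [a [b [lm [rm [my mlm mrm [nlm nrm] lmrm]]]]] := interior_noninterior_mids Iy.
  have [xlm|] := boolP (x >=< lm); last by exists lm; rewrite ?inS.
  have [xrm|] := boolP (x >=< rm); last by exists rm; rewrite ?inS.
  case/andP: my => ay yb; move: nxy; have -> : (x >=< y) = (x <= y) || (y <= x) by [].
  case/orP: (comparable_two_mids mlm mrm lmrm xlm xrm) => [xa|bx].
    by rewrite (le_trans xa (covL_le ay)).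
  by rewrite (le_trans (covL_le yb) bx) orbT.
- apply: contra nchain => /forallP chainL; apply/forallP => x; apply/forallP => y.
  by apply/implyP => _; have /forallP/(_ y) := chainL x; rewrite !in_setT.
- move=> x _ x0 x1; have [Ix|nIx] := boolP (interior l1 x); last first.
    by have [y _ nxy] := uncomp x (inS _ nIx) x0 x1; exists y; rewrite ?in_setT.
  have [a [b [lm [rm [/andP[ax _] /andP[alm _] _ [nlm _] _]]]]] := interior_noninterior_mids Ix.
  exists lm; rewrite ?in_setT //; apply: covL_uncomparable ax alm _.
  by apply: contraNneq nlm => <-.
Qed.

End Realizer.
End Interior.

Section Slimming.
Variables (d : Order.disp_t) (L : finTBLatticeType d) (l1 l2 : rel L).
Hypothesis diagram : planar_diagram l1 l2.
Implicit Types (S : {set L}) (x y z a b c e : L).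

Lemma eye_interior S e :
  (forall z, z \notin S -> interior l1 z) -> eye l1 S e -> interior l1 e.
Proof.
move=> outS /and3P[eS _ /existsP[a /existsP[b /existsP[c1 /existsP[c2 eyeE]]]]].
move: eyeE => /and5P[/and5P[_ _ _ _ /forallP len2] ae eb c1S].
move=> /and5P[ac1 c1b c2S ac2 /and3P[c2b c1e ec2]].
have midS z : z \in S -> a < z -> z < b -> mid a b z.
  move=> zS az zb; have := len2 z; rewrite zS az zb => /andP[az' zb'].
  by rewrite /mid !(covS_noninterior diagram outS).
by apply: (interiorI (midS e eS ae eb) (midS c1 c1S ac1 c1b) (midS c2 c2S ac2 c2b)).
Qed.

Lemma slimming_reach_interior S : slimming_reach l1 S -> forall z, z \notin S -> interior l1 z.
Proof.
elim=> [|S' e _ outS' eyeE] z; first by rewrite in_setT.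
by rewrite !inE negb_and negbK => /predU1P[->|/outS']; [apply: eye_interior eyeE | ].
Qed.

Hypothesis semimod : semimodular L.

Lemma semimodular_mid a c b z : mid a b c -> a < z -> z < b -> mid a b z.
Proof.
case/andP=> ac cb.
have upper y : a < y -> y < b -> ~~ (c <= y) -> covL y b.
  move=> ay yb ncy; have cyb : c `|` y = b.
    have := leUl c y; rewrite le_eqVlt => /predU1P[ccy|ccy].
      have yc : y < c.
        by rewrite lt_neqAle {2}ccy leUr andbT; apply: contraNneq ncy => ->.
      by case: (covL_nomid ac ay yc).
    have : c `|` y <= b by rewrite leUx (covL_le cb) (ltW yb).
    by rewrite le_eqVlt => /predU1P[//|cyb]; case: (covL_nomid cb ccy cyb).
  by have := semimod y ac; rewrite (join_idPr (ltW ay)) cyb (lt_eqF yb).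
move=> az zb; have [cz|ncz] := boolP (c <= z).
  have [<-|lt_cz] := eqVneq c z; first by rewrite /mid ac cb.
  by case: (covL_nomid cb (_ : c < z) zb); rewrite lt_def eq_sym lt_cz.
rewrite /mid (upper z) // andbT; apply/covLP; split=> // w aw wz.
have [cw|ncw] := boolP (c <= w).
  by apply: (covL_nomid cb) zb; apply: le_lt_trans cw wz.
exact: covL_nomid (upper w aw (lt_trans wz zb) ncw) wz zb.
Qed.

Lemma interval_len2_mid S a b x :
  a \in S -> b \in S -> x \in S -> mid a b x -> interval_len2 S a b.
Proof.
move=> aS bS xS mx; have /andP[ax xb] := mx.
rewrite /interval_len2 aS bS (lt_trans (covL_lt ax) (covL_lt xb)) /=.
apply/andP; split; first by apply/existsP; exists x; rewrite xS (covL_lt ax) (covL_lt xb).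
apply/forallP => z; apply/implyP => /and3P[zS az zb].
by have /andP[az' zb'] := semimodular_mid mx az zb; rewrite !covL_covS.
Qed.

Lemma full_slimming_noninterior S : full_slimming l1 S -> S = [set x | ~~ interior l1 x].
Proof.
case=> reachS noeye; have outS := slimming_reach_interior reachS.
have inS y : ~~ interior l1 y -> y \in S by move=> ny; apply: contraR ny => /outS.
apply/setP => x; rewrite inE; apply/idP/idP => [xS|/inS//]; apply/negP => Ix.
have [a [b /cover_sets1P[mx _ _]]] := interiorP diagram Ix.
have [lm [rm [mlm mrm lmin rmax]]] := extremal_mids diagram mx.
have [nlm nrm] := extremal_noninterior diagram mlm mrm lmin rmax.
have [lmx xrm _] := interior_between diagram mlm mrm lmin rmax mx Ix.
have /andP[/(reducible_noninterior diagram) na /(reducible_noninterior diagram) nb] :=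
  interior_bounds_reducible diagram Ix mx.
move/negP: (noeye x); apply; rewrite /eye xS (dbl_irr_interior diagram) //=.
apply/existsP; exists a; apply/existsP; exists b.
apply/existsP; exists lm; apply/existsP; exists rm.
rewrite (interval_len2_mid (inS _ na) (inS _ nb) xS mx) (inS _ nlm) (inS _ nrm) lmx xrm.
by case/andP: mx mlm mrm => ax xb /andP[alm lmb] /andP[arm rmb]; rewrite !covL_lt.
Qed.

Lemma nu_noninterior x :
  nu l1 [set y | ~~ interior l1 y] x = #|[set e | interior l1 e && covL x e]|.
Proof.
set S := [set y | ~~ interior l1 y].
have outS z : z \notin S -> interior l1 z by rewrite inE negbK.
have inS z : ~~ interior l1 z -> z \in S by rewrite inE.
apply: eq_card => e; rewrite !inE negbK; apply/andP/andP => -[Ie cell]; split=> //.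
  case/existsP: cell => c1 /existsP[c2 /existsP[t /and5P[/and5P[_ xc1 _ c1t _] xe et _ _]]].
  have mc1 : mid x t c1 by rewrite /mid !(covS_noninterior diagram outS).
  by case/andP: (semimodular_mid mc1 xe et).
have [a [b /cover_sets1P[me Ua _]]] := interiorP diagram Ie.
rewrite -(Ua _ cell) in me; have /andP[_ eb] := me.
have [lm [rm [mlm mrm lmin rmax]]] := extremal_mids diagram me.
have [nlm nrm] := extremal_noninterior diagram mlm mrm lmin rmax.
have [lme erm lmrm] := interior_between diagram mlm mrm lmin rmax me Ie.
have /andP[/(reducible_noninterior diagram) nx /(reducible_noninterior diagram) nb] :=
  interior_bounds_reducible diagram Ie me.
apply/existsP; exists lm; apply/existsP; exists rm; apply/existsP; exists b.
have lmrm' : leftof l1 lm rm by rewrite /leftof lmrm lmin.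
rewrite /cell4 lmrm' lme erm (covL_lt cell) (covL_lt eb) !andbT /=.
by case/andP: mlm mrm => xlm lmb /andP[xrm rmb]; rewrite !covL_covS ?inS.
Qed.

End Slimming.

Section PinnedPerm.
Variables (d : Order.disp_t) (L : finTBLatticeType d).

Lemma perm_mono_pinned (p : {perm L}) :
  (forall z, p z != z -> exists a b, [/\ cover_sets z = ([set a], [set b]),
     cover_sets (p z) = ([set a], [set b]), p a = a & p b = b]) ->
  {mono p : x y / x <= y}.
Proof.
move=> pinned x y; have [<-|xy] := eqVneq x y; first by rewrite !lexx.
have pxy : p x != p y by rewrite (inj_eq perm_inj).
have [px|/pinned[a [b [kx kpx pa pb]]]] := eqVneq (p x) x.
  have [py|/pinned[a [b [ky kpy _ _]]]] := eqVneq (p y) y; first by rewrite px py.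
  by rewrite (cover_sets1_le_below ky xy) (cover_sets1_le_below kpy pxy) px.
rewrite (cover_sets1_le_above kx) 1?eq_sym // (cover_sets1_le_above kpx) 1?eq_sym //.
have [py|my] := eqVneq (p y) y; first by rewrite py.
have [a' [b' [ky kpy _ _]]] := pinned y my.
have by' : b != y by apply: contraNneq my => <-; rewrite pb.
have bpy : b != p y by apply: contraNneq my => bpy; rewrite -(inj_eq (@perm_inj _ p)) -bpy pb.
by rewrite (cover_sets1_le_below ky by') (cover_sets1_le_below kpy bpy).
Qed.

End PinnedPerm.

Section TwoDiagrams.
Variables (d : Order.disp_t) (L : finTBLatticeType d) (l1 l2 m1 m2 : rel L).
Hypotheses (dl : planar_diagram l1 l2) (dm : planar_diagram m1 m2).

Lemma interior_exchange : exists p : {perm L},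
  [/\ {mono p : x y / x <= y}, forall x, reducible x -> p x = x &
      forall x, interior m1 (p x) = interior l1 x].
Proof.
pose A := [set x | interior l1 x]; pose B := [set x | interior m1 x].
have pinned z : z \in A :|: B ->
    exists a b, cover_sets z = ([set a], [set b]) /\ reducible a && reducible b.
  by rewrite !inE => /orP[/(interior_pinned dl)|/(interior_pinned dm)].
have fixed x : reducible x -> x \notin A :|: B.
  by move=> rx; rewrite !inE negb_or !(reducible_noninterior dl, reducible_noninterior dm).
have [k|p [pA key_p fix_p]] := @perm_fibers _ _ (@cover_sets _ L) A B.
  have [z /andP[/pinned[a [b [kz _]]] /eqP <-]|none] :=
    pickP [pred z | (z \in A :|: B) && (cover_sets z == k)].
    rewrite kz; transitivity (#|[set z | mid a b z]| - 2)%N.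
      by rewrite -(card_interior_cover_sets1 dl); apply: eq_card => x; rewrite !inE.
    by rewrite -(card_interior_cover_sets1 dm); apply: eq_card => x; rewrite !inE.
  suff fiber0 (D : {set L}) : D \subset A :|: B -> [set x in D | cover_sets x == k] = set0.
    by rewrite !fiber0 ?subsetUl ?subsetUr.
  move=> DAB; apply/setP => x; rewrite !inE; apply/negbTE/andP => -[xD kx].
  by have := none x; rewrite /= (subsetP DAB _ xD) kx.
exists p; split.
- apply: perm_mono_pinned => z mz.
  have zAB : z \in A :|: B by apply: contraNT mz => /fix_p ->.
  have [a [b [kz /andP[ra rb]]]] := pinned z zAB.
  by exists a, b; rewrite key_p kz !fix_p ?fixed.
- by move=> x /fixed /fix_p.
- move=> x; have : (p x \in B) = (x \in A) by rewrite -pA mem_imset //; apply: perm_inj.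
  by rewrite !inE.
Qed.

End TwoDiagrams.

Lemma lattice_iso_mono d1 d2 (L1 : finTBLatticeType d1) (L2 : finTBLatticeType d2)
  (f : L1 -> L2) : lattice_iso f -> {mono f : x y / x <= y}.
Proof. by case=> fbij fU _ x y; rewrite !leEjoin -fU (inj_eq (bij_inj fbij)). Qed.

Section Transport.
Variables (d1 d2 : Order.disp_t) (L1 : finTBLatticeType d1) (L2 : finTBLatticeType d2).
Variables (f : L1 -> L2).
Hypotheses (fbij : bijective f) (fmono : {mono f : x y / x <= y}).

Lemma mono_lattice_iso : lattice_iso f.
Proof.
have [g fK gK] := fbij; split=> // x y; apply/le_anti/andP; split.
- by rewrite -[_ `|` f y]gK fmono leUx -!fmono !gK leUl leUr.
- by rewrite leUx !fmono leUl leUr.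
- by rewrite lexI !fmono leIl leIr.
- by rewrite -[_ `&` f y]gK fmono lexI -!fmono !gK leIl leIr.
Qed.

Let fmono_lt : {mono f : x y / x < y}.
Proof. by move=> x y; rewrite !lt_def fmono (inj_eq (bij_inj fbij)). Qed.

Lemma covL_mono x y : covL (f x) (f y) = covL x y.
Proof.
have [g fK gK] := fbij; apply/covLP/covLP => -[xy nomid]; split.
- by rewrite -fmono_lt.
- by move=> z xz zy; apply: (nomid (f z)); rewrite fmono_lt.
- by rewrite fmono_lt.
- by move=> z xz zy; apply: (nomid (g z)); rewrite -fmono_lt gK.
Qed.

Lemma planar_diagram_relpre (m1 m2 : rel L2) :
  planar_diagram m1 m2 -> planar_diagram (relpre f m1) (relpre f m2).
Proof.
have finj := bij_inj fbij.
have linear_relpre (r : rel L2) : linear_order r -> linear_order (relpre f r).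
  case=> rr ar tr tor; split=> [x|x y /ar/finj //|y x z|x y] /=;
    [exact: rr | exact: tr | exact: tor].
case=> lin1 lin2 le12; split; [exact: linear_relpre | exact: linear_relpre |].
by move=> x y /=; rewrite -le12 fmono.
Qed.

Lemma interior_relpre (m1 : rel L2) x : interior (relpre f m1) x = interior m1 (f x).
Proof.
have [g fK gK] := fbij; have finj := can_inj fK.
have leftof_relpre u v : leftof (relpre f m1) u v = leftof m1 (f u) (f v).
  by rewrite /leftof (inj_eq finj).
have mid_mono a b y : mid (f a) (f b) (f y) = mid a b y by rewrite /mid !covL_mono.
apply/idP/idP => /existsP[a /existsP[b /existsP[c1 /existsP[c2 /and5P[mx mc1 mc2 c1x xc2]]]]].
  by apply: (interiorI (a := f a) (b := f b) (c1 := f c1) (c2 := f c2));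
    rewrite ?mid_mono -?leftof_relpre.
by apply: (interiorI (a := g a) (b := g b) (c1 := g c1) (c2 := g c2));
  rewrite 1?leftof_relpre -1?mid_mono !gK.
Qed.

Variables (l1 : rel L1) (m1 : rel L2).
Hypothesis interior_f : forall x, interior m1 (f x) = interior l1 x.

Lemma imset_noninterior : f @: [set x | ~~ interior l1 x] = [set y | ~~ interior m1 y].
Proof. by apply: (imset_set_bij fbij) => x; rewrite interior_f. Qed.

Lemma card_interior_covers_mono x :
  #|[set e | interior l1 e && covL x e]| = #|[set e | interior m1 e && covL (f x) e]|.
Proof. by apply: (card_set_bij fbij) => e; rewrite interior_f covL_mono. Qed.

End Transport.
Theorem mainTheorem8 :
  (* (i) *)
  (forall (d : Order.disp_t) (L : finTBLatticeType d) (l1 l2 : rel L) (S : {set L}),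
     semimodular L -> planar_diagram l1 l2 -> full_slimming l1 S ->
     (gs_indecomposable [set: L] <-> gs_indecomposable S)) /\
  (* (ii) *)
  (forall (d1 d2 : Order.disp_t) (L1 : finTBLatticeType d1) (L2 : finTBLatticeType d2)
          (l1 l2 : rel L1) (m1 m2 : rel L2) (S1 : {set L1}) (S2 : {set L2}),
     semimodular L1 -> planar_diagram l1 l2 -> full_slimming l1 S1 ->
     semimodular L2 -> planar_diagram m1 m2 -> full_slimming m1 S2 ->
     forall phi : L1 -> L2, lattice_iso phi ->
     exists pi : L1 -> L1,
       [/\ lattice_iso pi,
           (forall x, reducible x -> pi x = x),
           [set phi (pi x) | x in S1] = S2 &
           (forall x, x \in S1 -> nu l1 S1 x = nu m1 S2 (phi (pi x)))]) /\
  (* (iii) *)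
  (forall (d : Order.disp_t) (L : finTBLatticeType d) (l1 l2 m1 m2 : rel L)
          (S T : {set L}),
     semimodular L -> planar_diagram l1 l2 -> planar_diagram m1 m2 ->
     full_slimming l1 S -> full_slimming m1 T ->
     exists f : L -> L,
       [set f x | x in S] = T /\
       (forall x y, x \in S -> y \in S -> (x <= y) = (f x <= f y))).
Proof.
split; [|split].
- move=> d L l1 l2 S semimod dl fullS.
  rewrite (full_slimming_noninterior dl semimod fullS).
  exact: gs_indecomposable_noninterior dl.
- move=> d1 d2 L1 L2 l1 l2 m1 m2 S1 S2 sm1 dl full1 sm2 dm full2 phi iso_phi.
  have [phi_bij _ _] := iso_phi; have phi_mono := lattice_iso_mono iso_phi.
  have dm' := planar_diagram_relpre phi_bij phi_mono dm.
  have [pi [pi_mono pi_red pi_int]] := interior_exchange dl dm'.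
  have pi_bij : bijective pi := injF_bij (@perm_inj _ pi).
  have psi_bij : bijective (fun x => phi (pi x)) := bij_comp phi_bij pi_bij.
  have psi_mono : {mono (fun x => phi (pi x)) : x y / x <= y}.
    by move=> x y; rewrite phi_mono pi_mono.
  have psi_int x : interior m1 (phi (pi x)) = interior l1 x.
    by rewrite -(interior_relpre phi_bij phi_mono) pi_int.
  rewrite (full_slimming_noninterior dl sm1 full1) (full_slimming_noninterior dm sm2 full2).
  exists pi; split=> [|||x _].
  + exact: mono_lattice_iso pi_bij pi_mono.
  + exact: pi_red.
  + by apply: (imset_noninterior psi_bij psi_int).
  + rewrite (nu_noninterior dl sm1) (nu_noninterior dm sm2).
    by apply: (card_interior_covers_mono psi_bij psi_mono psi_int).
- move=> d L l1 l2 m1 m2 S T semimod dl dm fullS fullT.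
  have [p [p_mono _ p_int]] := interior_exchange dl dm.
  exists p; split; last by move=> x y _ _; rewrite p_mono.
  rewrite (full_slimming_noninterior dl semimod fullS) (full_slimming_noninterior dm semimod fullT).
  by apply: (imset_noninterior (injF_bij (@perm_inj _ p)) p_int).
Qed.
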